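(* Let $m,k\in\mathbb{N}$, let $\beta,\mu\in\mathbb{C}$ with $\frac{\beta}{2}-m\notin\mathbb{Z}_0^-$, $\Re(\beta)>0$ and $\Re(\mu)>0$. Then \[ \int_0^\infty t^{\beta-1}e^{-\mu t}\,{}_2F_2\left[\begin{array}{r} -2m-1,\ -m-k-\tfrac{1}{2};\\ -2m-2k-1,\ \tfrac{\beta}{2}-m;\end{array}\mu t\right]_{2m+1} dt=0. \]
   Context: $\mathbb{N}=\{1,2,3,\dots\}$, $\mathbb{Z}_0^-=\{0,-1,-2,\dots\}$. For $a\in\mathbb{C}$ and $n\in\mathbb{N}_0$, $(a)_0=1$ and $(a)_n=a(a+1)\cdots(a+n-1)$. For $N\in\mathbb{N}_0$, the truncated series is ${}_2F_2\left[\begin{array}{r} a_1,a_2;\\ b_1,b_2;\end{array}z\right]_N=\sum_{n=0}^{N}\frac{(a_1)_n(a_2)_n}{(b_1)_n(b_2)_n}\frac{z^n}{n!}$ (first $N+1$ terms). The left side is the Mellin transform $\int_0^\infty t^{s-1}f(t)\,dt$ at $s=\beta$. *)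

From Stdlib Require Import Reals Arith Factorial.
From Coquelicot Require Import Coquelicot.
Open Scope C_scope.

Definition Cexp (z : C) : C :=
  (exp (Re z) * cos (Im z), exp (Re z) * sin (Im z))%R.

Definition Rcpow (t : R) (s : C) : C := Cexp (s * RtoC (ln t)).

Fixpoint poch (a : C) (n : nat) : C :=
  match n with
  | O => 1
  | S n' => poch a n' * (a + INR n')
  end.

Fixpoint Csum (f : nat -> C) (N : nat) : C :=
  match N with
  | O => f O
  | S N' => Csum f N' + f N
  end.

Definition F22_trunc (a1 a2 b1 b2 z : C) (N : nat) : C :=
  Csum (fun n => poch a1 n * poch a2 n / (poch b1 n * poch b2 n)
                 * Cpow z n / RtoC (INR (fact n))) N.

From Stdlib Require Import Reals.
From Coquelicot Require Import Coquelicot.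
From Stdlib Require Import Factorial Lia Lra.
Open Scope C_scope.

(* Write the truncated 2F2 as [sum_{n <= N} c_n (mu t)^n].  Formally
   [int_0^oo t^(beta-1) e^(-mu t) (mu t)^n dt = (beta)_n Gamma(beta) mu^(-beta)], so the
   integral is a multiple of [sum_n c_n (beta)_n], a terminating 3F2 at 1 with
   parameters (-2m-1, a, beta; 2a, beta/2 - m), a = -m-k-1/2, which vanishes by Watson's
   theorem (odd number of terms).  Watson's sum is proved by induction on m, via a
   contiguity relation in the first parameter certified by a telescoping term.
   The Gamma function is avoided altogether: whenever [sum_n c_n (beta)_n = 0], the
   integrand has the elementary antiderivative t^beta e^(-mu t) Q(t) with Q a polynomial,
   and this antiderivative tends to 0 both at 0+ and at +oo. *)

Lemma Csum_ext (f g : nat -> C) (N : nat) :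
  (forall n, (n <= N)%nat -> f n = g n) -> Csum f N = Csum g N.
Proof.
  induction N as [|N IH]; intros Hfg; simpl.
  - apply Hfg; lia.
  - rewrite IH, Hfg by (lia || (intros; apply Hfg; lia)). reflexivity.
Qed.

Lemma Csum_minus (f g : nat -> C) (N : nat) :
  Csum (fun n => f n - g n) N = Csum f N - Csum g N.
Proof. induction N as [|N IH]; simpl; [reflexivity | rewrite IH; ring]. Qed.

Lemma Csum_mult_l (a : C) (f : nat -> C) (N : nat) :
  Csum (fun n => a * f n) N = a * Csum f N.
Proof. induction N as [|N IH]; simpl; [reflexivity | rewrite IH; ring]. Qed.

Lemma Csum_telescope (g : nat -> C) (N : nat) :
  Csum (fun n => g (S n) - g n) N = g (S N) - g O.
Proof. induction N as [|N IH]; simpl; [reflexivity | rewrite IH; ring]. Qed.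

Lemma Csum_S_last_eq0 (f : nat -> C) (N : nat) : f (S N) = 0 -> Csum f (S N) = Csum f N.
Proof. intros Hf. simpl. rewrite Hf. ring. Qed.

Lemma RtoC_INR_S (n : nat) : RtoC (INR (S n)) = RtoC (INR n) + 1.
Proof. rewrite S_INR, RtoC_plus. reflexivity. Qed.

Lemma RtoC_INR_double_plus_1 (m : nat) : RtoC (INR (2 * m + 1)) = 2 * RtoC (INR m) + 1.
Proof. rewrite plus_INR, mult_INR, RtoC_plus, RtoC_mult. reflexivity. Qed.

Lemma RtoC_INR_plus_1_neq0 (n : nat) : RtoC (INR n) + 1 <> 0.
Proof.
  rewrite <- RtoC_INR_S. intros E. apply RtoC_inj in E.
  pose proof (lt_0_INR (S n) (Nat.lt_0_succ n)). lra.
Qed.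

Lemma RtoC_opp_INR_S_neq0 (p : nat) : RtoC (- INR (S p)) <> 0.
Proof.
  intros E. apply RtoC_inj in E. pose proof (lt_0_INR (S p) (Nat.lt_0_succ p)). lra.
Qed.

Lemma RtoC_INR_fact_neq0 (n : nat) : RtoC (INR (fact n)) <> 0.
Proof. intros E. apply RtoC_inj in E. pose proof (lt_0_INR _ (lt_O_fact n)). lra. Qed.

Lemma poch_S (a : C) (n : nat) : poch a (S n) = poch a n * (a + RtoC (INR n)).
Proof. reflexivity. Qed.

Lemma poch_S_l (a : C) (n : nat) : poch a (S n) = a * poch (a + 1) n.
Proof.
  revert a; induction n as [|n IH]; intros a.
  - simpl. ring.
  - rewrite poch_S, IH, poch_S, RtoC_INR_S. ring.
Qed.

Lemma poch_plus_1 (a : C) (n : nat) :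
  a <> 0 -> poch (a + 1) n = poch a n * (a + RtoC (INR n)) / a.
Proof. intros Ha. rewrite <- poch_S, poch_S_l. field. exact Ha. Qed.

Lemma poch_opp_INR_eq0 (p n : nat) : (p < n)%nat -> poch (RtoC (- INR p)) n = 0.
Proof.
  induction n as [|n IH]; intros Hpn; [lia|].
  rewrite poch_S. destruct (Nat.eq_dec p n) as [->|Hne].
  - rewrite RtoC_opp. ring.
  - rewrite IH by lia. ring.
Qed.

Lemma poch_neq0 (a : C) (n : nat) :
  (forall i, (i < n)%nat -> a + RtoC (INR i) <> 0) -> poch a n <> 0.
Proof.
  induction n as [|n IH]; intros Ha.
  - exact C1_nz.
  - rewrite poch_S. apply Cmult_neq_0; [apply IH; intros; apply Ha|apply Ha]; lia.
Qed.

Lemma poch_neq0_of_not_nonpos_int (y : C) (n : nat) :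
  (forall j, y <> RtoC (- INR j)) -> poch y n <> 0.
Proof.
  intros Hy. apply poch_neq0. intros i _ E. apply (Hy i).
  rewrite RtoC_opp. replace y with (y + RtoC (INR i) - RtoC (INR i)) by ring.
  rewrite E. ring.
Qed.

Lemma poch_S_neq0_inv (a : C) (n : nat) :
  poch a (S n) <> 0 -> poch a n <> 0 /\ a + RtoC (INR n) <> 0.
Proof. rewrite poch_S. intros H. split; intros E; apply H; rewrite E; ring. Qed.

Lemma poch_neq0_le (a : C) (n p : nat) : (n <= p)%nat -> poch a p <> 0 -> poch a n <> 0.
Proof.
  intros Hnp. induction Hnp as [|p _ IH]; [tauto|].
  intros Hp. apply IH, (poch_S_neq0_inv _ _ Hp).
Qed.

(** * Watson's sum *)

Definition F32_term (a1 a2 a3 b1 b2 : C) (n : nat) : C :=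
  poch a1 n * poch a2 n * poch a3 n / (poch b1 n * poch b2 n) / RtoC (INR (fact n)).

Lemma F32_term_S (a1 a2 a3 b1 b2 : C) (n : nat) :
  poch b1 (S n) <> 0 -> poch b2 (S n) <> 0 ->
  F32_term a1 a2 a3 b1 b2 (S n) =
  F32_term a1 a2 a3 b1 b2 n *
  ((a1 + RtoC (INR n)) * (a2 + RtoC (INR n)) * (a3 + RtoC (INR n))
   / ((b1 + RtoC (INR n)) * (b2 + RtoC (INR n)) * (RtoC (INR n) + 1))).
Proof.
  intros [Hb1 Hb1n]%poch_S_neq0_inv [Hb2 Hb2n]%poch_S_neq0_inv.
  pose proof (RtoC_INR_fact_neq0 n). pose proof (RtoC_INR_plus_1_neq0 n).
  unfold F32_term. rewrite !poch_S.
  change (fact (S n)) with (S n * fact n)%nat.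
  rewrite mult_INR, RtoC_mult, RtoC_INR_S.
  field. repeat split; assumption.
Qed.

Section WatsonContiguity.

Variables (a c x e : C).

Definition watson_ratio : C := 1 - c * x / (e * (2 * c - a - 1)).

(* Found by Zeilberger's algorithm. *)
Definition watson_certificate (n : nat) : C :=
  RtoC (INR n) * (RtoC (INR n) + 2 * c - 1) * F32_term a c x (2 * c) e n
  / (a * (2 * c - a - 1)).

Lemma F32_watson_contiguous (n : nat) :
  a + x + 1 = 2 * e ->
  a <> 0 -> a + 1 <> 0 -> 2 * c - a - 1 <> 0 ->
  poch (2 * c) (S n) <> 0 -> poch e (S n) <> 0 ->
  F32_term a c x (2 * c) e n - watson_ratio * F32_term (a + 2) c x (2 * c) (e + 1) n
  = watson_certificate (S n) - watson_certificate n.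
Proof.
  intros Hwatson Ha Ha1 Hca Hc He.
  assert (He0 : e <> 0).
  { rewrite poch_S_l in He. intros E. apply He. rewrite E. ring. }
  destruct (poch_S_neq0_inv _ _ He) as [Hen Hen'].
  destruct (poch_S_neq0_inv _ _ Hc) as [Hcn Hcn'].
  pose proof (RtoC_INR_fact_neq0 n). pose proof (RtoC_INR_plus_1_neq0 n).
  assert (Hshift : F32_term (a + 2) c x (2 * c) (e + 1) n
                   = F32_term a c x (2 * c) e n
                     * ((a + RtoC (INR n)) * (a + 1 + RtoC (INR n)) * e
                        / (a * (a + 1) * (e + RtoC (INR n))))).
  { unfold F32_term. replace (a + 2) with (a + 1 + 1) by ring.
    rewrite (poch_plus_1 (a + 1)), (poch_plus_1 a), (poch_plus_1 e) by assumption.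
    field. repeat split; assumption. }
  unfold watson_certificate, watson_ratio.
  rewrite Hshift, F32_term_S, RtoC_INR_S by assumption.
  replace x with (2 * e - a - 1) by (rewrite <- Hwatson; ring).
  field. repeat split; assumption.
Qed.

End WatsonContiguity.

Lemma F32_watson_sum_step (p : nat) (c x e : C) :
  let a := RtoC (- INR (S (S p))) in
  a + x + 1 = 2 * e -> poch (2 * c) (S (S (S p))) <> 0 -> poch e (S (S (S p))) <> 0 ->
  Csum (F32_term a c x (2 * c) e) (S (S p))
  = watson_ratio a c x e * Csum (F32_term (RtoC (- INR p)) c x (2 * c) (e + 1)) p.
Proof.
  intros a Hwatson Hc He.
  assert (Ha2 : a + 2 = RtoC (- INR p)) by (unfold a; rewrite !RtoC_opp, !RtoC_INR_S; ring).
  assert (Ha : a <> 0) by apply RtoC_opp_INR_S_neq0.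
  assert (Ha1 : a + 1 <> 0).
  { replace (a + 1) with (RtoC (- INR (S p))) by (unfold a; rewrite !RtoC_opp, !RtoC_INR_S; ring).
    apply RtoC_opp_INR_S_neq0. }
  assert (Hca : 2 * c - a - 1 <> 0).
  { replace (2 * c - a - 1) with (2 * c + RtoC (INR (S p)))
      by (unfold a; rewrite !RtoC_opp, !RtoC_INR_S; ring).
    apply (poch_S_neq0_inv _ _ (poch_neq0_le _ (S (S p)) (S (S (S p))) ltac:(lia) Hc)). }
  assert (Hcontig : forall n, (n <= S (S p))%nat ->
    F32_term a c x (2 * c) e n
    - watson_ratio a c x e * F32_term (RtoC (- INR p)) c x (2 * c) (e + 1) n
    = watson_certificate a c x e (S n) - watson_certificate a c x e n).
  { intros n Hn. rewrite <- Ha2.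
    apply F32_watson_contiguous; try assumption;
      apply (poch_neq0_le _ _ (S (S (S p)))); (lia || assumption). }
  assert (Hcert0 : watson_certificate a c x e 0 = 0).
  { unfold watson_certificate. simpl INR. unfold Cdiv. ring. }
  assert (Hcert_last : watson_certificate a c x e (S (S (S p))) = 0).
  { unfold watson_certificate, F32_term, a. rewrite poch_opp_INR_eq0 by lia. unfold Cdiv. ring. }
  rewrite <- (Csum_S_last_eq0 _ p), <- (Csum_S_last_eq0 _ (S p))
    by (unfold F32_term; rewrite poch_opp_INR_eq0 by lia; unfold Cdiv; ring).
  apply Ceq_minus.
  rewrite <- Csum_mult_l, <- Csum_minus, (Csum_ext _ _ _ Hcontig), Csum_telescope,
    Hcert0, Hcert_last.
  ring.
Qed.

Theorem F32_watson_odd (m : nat) (c x : C) :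
  poch (2 * c) (2 * m + 2) <> 0 ->
  (forall j, x / 2 - RtoC (INR m) <> RtoC (- INR j)) ->
  Csum (F32_term (RtoC (- INR (2 * m + 1))) c x (2 * c) (x / 2 - RtoC (INR m))) (2 * m + 1) = 0.
Proof.
  induction m as [|m IH]; intros Hc Hx.
  - assert (Hc0 : c <> 0).
    { intros E. apply Hc. rewrite E. simpl. change (INR 0) with 0%R. ring. }
    assert (Hx0 : x <> 0).
    { intros E. apply (Hx 0%nat). rewrite E. simpl. change (INR 0) with 0%R. rewrite Ropp_0. field. }
    unfold F32_term. simpl. change (INR 0) with 0%R. rewrite RtoC_opp. field. auto.
  - replace (2 * S m + 1)%nat with (S (S (2 * m + 1))) by lia.
    rewrite F32_watson_sum_step.
    + replace (x / 2 - RtoC (INR (S m)) + 1) with (x / 2 - RtoC (INR m))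
        by (rewrite RtoC_INR_S; ring).
      rewrite IH; [ring| |].
      * apply (poch_neq0_le _ _ (2 * S m + 2)); [lia|exact Hc].
      * intros j E. apply (Hx (S j)). rewrite RtoC_opp in E. rewrite RtoC_opp, !RtoC_INR_S.
        replace (x / 2 - (RtoC (INR m) + 1)) with (x / 2 - RtoC (INR m) - 1) by ring.
        rewrite E. ring.
    + rewrite RtoC_opp, !RtoC_INR_S, RtoC_INR_double_plus_1. field.
    + apply (poch_neq0_le _ _ (2 * S m + 2)); [lia|exact Hc].
    + apply poch_neq0_of_not_nonpos_int, Hx.
Qed.

(** * Derivatives and integrals of complex functions of a real variable *)

Definition is_derive_RC (f : R -> C) (x : R) (l : C) : Prop :=
  is_derive (fun s => fst (f s)) x (fst l) /\ is_derive (fun s => snd (f s)) x (snd l).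

Lemma is_derive_RC_eq (f : R -> C) (x : R) (l l' : C) :
  is_derive_RC f x l -> l = l' -> is_derive_RC f x l'.
Proof. intros Hf <-. exact Hf. Qed.

Lemma is_derive_RC_ext (f g : R -> C) (x : R) (l : C) :
  (forall s, f s = g s) -> is_derive_RC f x l -> is_derive_RC g x l.
Proof.
  intros Hfg [H1 H2]. split.
  - apply (is_derive_ext (fun s => fst (f s))); [intros s; rewrite Hfg; reflexivity | exact H1].
  - apply (is_derive_ext (fun s => snd (f s))); [intros s; rewrite Hfg; reflexivity | exact H2].
Qed.

Lemma is_derive_RC_RtoC (f : R -> R) (x l : R) :
  is_derive f x l -> is_derive_RC (fun s => RtoC (f s)) x (RtoC l).
Proof.
  intros Hf. split; simpl; [exact Hf | exact (@is_derive_const R_AbsRing R_NormedModule 0%R x)].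
Qed.

Lemma is_derive_RC_plus (f g : R -> C) (x : R) (lf lg : C) :
  is_derive_RC f x lf -> is_derive_RC g x lg ->
  is_derive_RC (fun s => f s + g s) x (lf + lg).
Proof.
  intros [Hf1 Hf2] [Hg1 Hg2]. split; simpl.
  - exact (@is_derive_plus R_AbsRing R_NormedModule _ _ x _ _ Hf1 Hg1).
  - exact (@is_derive_plus R_AbsRing R_NormedModule _ _ x _ _ Hf2 Hg2).
Qed.

Lemma is_derive_RC_mult (f g : R -> C) (x : R) (lf lg : C) :
  is_derive_RC f x lf -> is_derive_RC g x lg ->
  is_derive_RC (fun s => f s * g s) x (lf * g x + f x * lg).
Proof.
  intros [Hf1 Hf2] [Hg1 Hg2]. split; simpl.
  - replace (_ + _)%R with ((fst lf * fst (g x) + fst (f x) * fst lg)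
                          - (snd lf * snd (g x) + snd (f x) * snd lg))%R by ring.
    exact (@is_derive_minus R_AbsRing R_NormedModule _ _ x _ _
             (Derive.is_derive_mult _ _ x _ _ Hf1 Hg1)
             (Derive.is_derive_mult _ _ x _ _ Hf2 Hg2)).
  - replace (_ + _)%R with ((fst lf * snd (g x) + fst (f x) * snd lg)
                          + (snd lf * fst (g x) + snd (f x) * fst lg))%R by ring.
    exact (@is_derive_plus R_AbsRing R_NormedModule _ _ x _ _
             (Derive.is_derive_mult _ _ x _ _ Hf1 Hg2)
             (Derive.is_derive_mult _ _ x _ _ Hf2 Hg1)).
Qed.

Lemma is_derive_RC_scal (a : C) (f : R -> C) (x : R) (l : C) :
  is_derive_RC f x l -> is_derive_RC (fun s => a * f s) x (a * l).
Proof.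
  intros Hf. eapply is_derive_RC_eq.
  - apply (is_derive_RC_mult (fun _ => a) f x 0 l); [|exact Hf].
    split; exact (@is_derive_const R_AbsRing R_NormedModule _ x).
  - ring.
Qed.

Lemma is_derive_RC_Cexp (f : R -> C) (x : R) (l : C) :
  is_derive_RC f x l -> is_derive_RC (fun s => Cexp (f s)) x (l * Cexp (f x)).
Proof.
  intros [H1 H2].
  assert (Hexp := is_derive_comp exp (fun s => fst (f s)) x _ _ (is_derive_exp _) H1).
  assert (Hcos := is_derive_comp cos (fun s => snd (f s)) x _ _ (is_derive_cos _) H2).
  assert (Hsin := is_derive_comp sin (fun s => snd (f s)) x _ _ (is_derive_sin _) H2).
  unfold Cexp, Re, Im. split; simpl.
  - match goal with |- is_derive _ _ ?v =>
      replace v with (fst l * exp (fst (f x)) * cos (snd (f x))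
                      + exp (fst (f x)) * (snd l * - sin (snd (f x))))%R by ring end.
    exact (Derive.is_derive_mult _ _ x _ _ Hexp Hcos).
  - match goal with |- is_derive _ _ ?v =>
      replace v with (fst l * exp (fst (f x)) * sin (snd (f x))
                      + exp (fst (f x)) * (snd l * cos (snd (f x))))%R by ring end.
    exact (Derive.is_derive_mult _ _ x _ _ Hexp Hsin).
Qed.

Lemma is_derive_RC_Csum (f : nat -> R -> C) (l : nat -> C) (x : R) (N : nat) :
  (forall j, (j <= N)%nat -> is_derive_RC (f j) x (l j)) ->
  is_derive_RC (fun s => Csum (fun j => f j s) N) x (Csum l N).
Proof.
  induction N as [|N IH]; intros Hf; simpl.
  - apply Hf; lia.
  - apply (is_derive_RC_plus (fun s => Csum (fun j => f j s) N) (f (S N))).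
    + apply IH. intros j Hj. apply Hf. lia.
    + apply Hf. lia.
Qed.

Lemma is_derive_RC_pow (x : R) (j : nat) :
  is_derive_RC (fun s => RtoC s ^ j) x (RtoC (INR j) * RtoC x ^ pred j).
Proof.
  apply (is_derive_RC_ext (fun s => RtoC (s ^ j))); [intros s; apply RtoC_pow|].
  eapply is_derive_RC_eq.
  - apply is_derive_RC_RtoC, (is_derive_pow (fun s => s) j x 1%R (is_derive_id x)).
  - rewrite RtoC_mult, RtoC_mult, RtoC_pow. ring.
Qed.

Lemma is_RInt_derive_RC (F f : R -> C) (a b : R) :
  (forall x, Rmin a b <= x <= Rmax a b -> is_derive_RC F x (f x))%R ->
  (forall x, Rmin a b <= x <= Rmax a b -> exists l, is_derive_RC f x l)%R ->
  is_RInt f a b (minus (F b) (F a)).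
Proof.
  intros HF Hf.
  apply (is_RInt_fct_extend_pair f a b (minus (fst (F b)) (fst (F a))) (minus (snd (F b)) (snd (F a)))).
  - apply (is_RInt_derive (fun s => fst (F s)) (fun s => fst (f s))); [apply HF|].
    intros x Hx. destruct (Hf x Hx) as [l [Hl _]].
    apply (ex_derive_continuous (K := R_AbsRing) (V := R_NormedModule)). eexists. exact Hl.
  - apply (is_RInt_derive (fun s => snd (F s)) (fun s => snd (f s))); [apply HF|].
    intros x Hx. destruct (Hf x Hx) as [l [_ Hl]].
    apply (ex_derive_continuous (K := R_AbsRing) (V := R_NormedModule)). eexists. exact Hl.
Qed.

Lemma is_RInt_gen_antiderivative {V : NormedModule R_AbsRing}
  {Fa Fb : (R -> Prop) -> Prop} {FFa : Filter Fa} {FFb : Filter Fb}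
  (f F : R -> V) (la lb : V) :
  filter_prod Fa Fb (fun ab => is_RInt f (fst ab) (snd ab) (minus (F (snd ab)) (F (fst ab)))) ->
  filterlim F Fa (locally la) -> filterlim F Fb (locally lb) ->
  is_RInt_gen f Fa Fb (minus lb la).
Proof.
  intros HI Ha Hb.
  apply (filterlimi_lim_ext_loc (fun ab => minus (F (snd ab)) (F (fst ab)))); [exact HI|].
  apply (filterlim_comp_2 (G := locally lb) (H := locally (opp la))
           (fun ab => F (snd ab)) (fun ab => opp (F (fst ab))) plus).
  - exact (filterlim_comp _ _ _ snd F _ _ _ filterlim_snd Hb).
  - apply (filterlim_comp _ _ _ (fun ab => F (fst ab)) opp _ _ _
             (filterlim_comp _ _ _ fst F _ _ _ filterlim_fst Ha)), filterlim_opp.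
  - apply filterlim_plus.
Qed.

Lemma filterlim_exp_ln_at_right_0 (p r : R) :
  (0 < p)%R -> (0 <= r)%R ->
  filterlim (fun t => exp (p * ln t - r * t)) (at_right 0) (locally 0%R).
Proof.
  intros Hp Hr. apply filterlim_locally. intros eps.
  exists (mkposreal _ (exp_pos (ln eps / p))). intros t Ht Ht0.
  unfold ball in Ht |- *; simpl in Ht |- *.
  unfold AbsRing_ball, abs, minus, plus, opp in Ht |- *; simpl in Ht |- *.
  rewrite Ropp_0, Rplus_0_r, Rabs_pos_eq in Ht by lra.
  rewrite Ropp_0, Rplus_0_r, Rabs_pos_eq by apply Rlt_le, exp_pos.
  assert (Hln : (ln t < ln eps / p)%R).
  { rewrite <- (ln_exp (ln eps / p)). apply ln_increasing; assumption. }
  rewrite <- (exp_ln eps) by apply cond_pos. apply exp_increasing.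
  apply (Rmult_lt_compat_l p) in Hln; [|exact Hp].
  replace (p * (ln eps / p))%R with (ln eps) in Hln by (field; lra).
  nra.
Qed.

Lemma is_lim_exp_ln_p_infty (q r : R) :
  (0 < r)%R -> is_lim (fun t => exp (q * ln t - r * t)) p_infty 0.
Proof.
  intros Hr.
  apply (is_lim_comp exp (fun t => q * ln t - r * t)%R p_infty 0 m_infty);
    [exact is_lim_exp_m| |exists 0%R; intros; discriminate].
  apply (is_lim_ext_loc (fun t => t * (q * (ln t / t) - r))%R).
  { exists 0%R. intros t Ht. field. lra. }
  replace m_infty with (Rbar_mult p_infty (q * 0 - r)%R).
  - apply is_lim_mult; [apply is_lim_id| |simpl; lra].
    apply (is_lim_minus _ _ _ (q * 0)%R r); [|apply is_lim_const|reflexivity].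
    apply (is_lim_scal_l _ q _ 0%R), is_lim_div_ln_p.
  - apply is_Rbar_mult_unique, is_Rbar_mult_p_infty_neg. simpl. lra.
Qed.

Lemma ball_C_0_Cmod (z : C) (eps : posreal) : (Cmod z < eps)%R -> ball (0 : C) eps z.
Proof.
  intros Hz. pose proof (Rmax_Cmod z).
  pose proof (Rmax_l (Rabs (fst z)) (Rabs (snd z))). pose proof (Rmax_r (Rabs (fst z)) (Rabs (snd z))).
  split; unfold ball; simpl; unfold AbsRing_ball, abs, minus, plus, opp; simpl;
    rewrite Ropp_0, Rplus_0_r; lra.
Qed.

Lemma filterlim_Cmod_0 {T : Type} {F : (T -> Prop) -> Prop} {FF : Filter F} (f : T -> C) :
  filterlim (fun x => Cmod (f x)) F (locally 0%R) -> filterlim f F (locally (0 : C)).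
Proof.
  intros Hf. apply filterlim_locally. intros eps.
  apply filterlim_locally with (eps := eps) in Hf.
  apply (filter_imp (fun x => ball 0%R eps (Cmod (f x)))); [|exact Hf].
  intros x Hx. apply ball_C_0_Cmod.
  unfold ball in Hx; simpl in Hx; unfold AbsRing_ball, abs, minus, plus, opp in Hx; simpl in Hx.
  rewrite Ropp_0, Rplus_0_r, Rabs_pos_eq in Hx by apply Cmod_ge_0. exact Hx.
Qed.

Lemma filterlim_Csum_0 {T : Type} {F : (T -> Prop) -> Prop} {FF : Filter F}
  (a : nat -> C) (f : nat -> T -> C) (N : nat) :
  (forall j, (j <= N)%nat -> filterlim (f j) F (locally (0 : C))) ->
  filterlim (fun x => Csum (fun j => a j * f j x) N) F (locally (0 : C)).
Proof.
  assert (Hscal : forall j, filterlim (f j) F (locally (0 : C)) ->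
                    filterlim (fun x => a j * f j x) F (locally (0 : C))).
  { intros j Hj. rewrite <- (Cmult_0_r (a j)).
    exact (filterlim_comp _ _ _ (f j) (fun z => a j * z) _ _ _ Hj
             (@filterlim_scal_r C_AbsRing C_NormedModule (a j) (RtoC 0))). }
  induction N as [|N IH]; intros Hf; simpl.
  - apply Hscal, Hf. lia.
  - rewrite <- (Cplus_0_r 0).
    apply (filterlim_comp_2 (G := locally (0 : C)) (H := locally (0 : C))
             (fun x => Csum (fun j => a j * f j x) N) (fun x => a (S N) * f (S N) x) Cplus).
    + apply IH. intros j Hj. apply Hf. lia.
    + apply Hscal, Hf. lia.
    + exact (@filterlim_plus C_AbsRing C_NormedModule (RtoC 0) (RtoC 0)).
Qed.

Lemma at_right_0_pos : at_right 0 (fun t => 0 < t)%R.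
Proof. exists (mkposreal 1 Rlt_0_1). intros t _ Ht. exact Ht. Qed.

Lemma Rbar_locally_p_infty_pos : Rbar_locally p_infty (fun t => 0 < t)%R.
Proof. exists 0%R. intros t Ht. exact Ht. Qed.

(** * The kernel t^s e^(-mu t) *)

Lemma Cexp_add (a b : C) : Cexp (a + b) = Cexp a * Cexp b.
Proof.
  unfold Cexp, Cmult, Cplus, Re, Im. simpl. rewrite exp_plus, cos_plus, sin_plus.
  apply injective_projections; simpl; ring.
Qed.

Lemma Cexp_RtoC (r : R) : Cexp (RtoC r) = RtoC (exp r).
Proof.
  unfold Cexp, RtoC, Re, Im. simpl. rewrite cos_0, sin_0.
  apply injective_projections; simpl; ring.
Qed.

Lemma Cmod_Cexp (z : C) : Cmod (Cexp z) = exp (Re z).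
Proof.
  unfold Cmod, Cexp. cbn [fst snd].
  replace ((exp (Re z) * cos (Im z)) ^ 2 + (exp (Re z) * sin (Im z)) ^ 2)%R
    with (exp (Re z) ^ 2 * (sin (Im z) ^ 2 + cos (Im z) ^ 2))%R by ring.
  rewrite <- !Rsqr_pow2, sin2_cos2, Rmult_1_r. apply sqrt_Rsqr, Rlt_le, exp_pos.
Qed.

Lemma Rcpow_add (t : R) (s w : C) : Rcpow t (s + w) = Rcpow t s * Rcpow t w.
Proof. unfold Rcpow. rewrite <- Cexp_add. f_equal. ring. Qed.

Lemma Rcpow_INR (t : R) (j : nat) : (0 < t)%R -> Rcpow t (RtoC (INR j)) = RtoC t ^ j.
Proof.
  intros Ht. unfold Rcpow.
  rewrite <- RtoC_mult, Cexp_RtoC, <- RtoC_pow, <- Rpower_pow by exact Ht.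
  reflexivity.
Qed.

Lemma Rcpow_succ (t : R) (s : C) : (0 < t)%R -> Rcpow t s = RtoC t * Rcpow t (s - 1).
Proof.
  intros Ht. rewrite <- (Cpow_1_r (RtoC t)), <- (Rcpow_INR t 1 Ht), <- Rcpow_add.
  f_equal. change (INR 1) with 1%R. ring.
Qed.

Lemma Cmod_Rcpow (t : R) (s : C) : Cmod (Rcpow t s) = exp (Re s * ln t).
Proof. unfold Rcpow. rewrite Cmod_Cexp. f_equal. unfold Re; simpl. ring. Qed.

Lemma is_derive_RC_Rcpow (t : R) (s : C) : (0 < t)%R ->
  is_derive_RC (fun u => Rcpow u s) t (s * RtoC (/ t) * Rcpow t s).
Proof.
  intros Ht. apply is_derive_RC_Cexp, is_derive_RC_scal, is_derive_RC_RtoC, is_derive_ln, Ht.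
Qed.

Definition mellin_kernel (s mu : C) (t : R) : C := Rcpow t s * Cexp (- (mu * RtoC t)).

Lemma mellin_kernel_mul_pow (s mu : C) (t : R) (j : nat) : (0 < t)%R ->
  mellin_kernel s mu t * RtoC t ^ j = mellin_kernel (s + RtoC (INR j)) mu t.
Proof. intros Ht. unfold mellin_kernel. rewrite Rcpow_add, Rcpow_INR by exact Ht. ring. Qed.

Lemma mellin_kernel_succ (s mu : C) (t : R) : (0 < t)%R ->
  mellin_kernel s mu t = RtoC t * mellin_kernel (s - 1) mu t.
Proof. intros Ht. unfold mellin_kernel. rewrite (Rcpow_succ t s Ht). ring. Qed.

Lemma Cmod_mellin_kernel (s mu : C) (t : R) :
  Cmod (mellin_kernel s mu t) = exp (Re s * ln t - Re mu * t).
Proof.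
  unfold mellin_kernel. rewrite Cmod_mult, Cmod_Rcpow, Cmod_Cexp, <- exp_plus.
  f_equal. unfold Re; simpl. ring.
Qed.

Lemma is_derive_mellin_kernel (s mu : C) (t : R) : (0 < t)%R ->
  is_derive_RC (mellin_kernel s mu) t ((s - mu * RtoC t) * mellin_kernel (s - 1) mu t).
Proof.
  intros Ht.
  assert (Hexp : is_derive_RC (fun u => Cexp (- (mu * RtoC u))) t (- mu * Cexp (- (mu * RtoC t)))).
  { apply is_derive_RC_Cexp, (is_derive_RC_ext (fun u => - mu * RtoC u)); [intros u; ring|].
    eapply is_derive_RC_eq.
    - exact (is_derive_RC_scal _ _ t _ (is_derive_RC_RtoC (fun u => u) t 1%R (is_derive_id t))).
    - ring. }
  eapply is_derive_RC_eq; [exact (is_derive_RC_mult _ _ t _ _ (is_derive_RC_Rcpow t s Ht) Hexp)|].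
  unfold mellin_kernel. rewrite (Rcpow_succ t s Ht).
  assert (Ht' : RtoC t <> 0) by (intros E; apply RtoC_inj in E; lra).
  rewrite RtoC_inv by lra. field. exact Ht'.
Qed.

Lemma filterlim_mellin_kernel_at_right_0 (s mu : C) :
  (0 < Re s)%R -> (0 <= Re mu)%R ->
  filterlim (mellin_kernel s mu) (at_right 0) (locally (0 : C)).
Proof.
  intros Hs Hmu. apply filterlim_Cmod_0.
  apply (filterlim_ext (fun t => exp (Re s * ln t - Re mu * t))).
  - intros t. symmetry. apply Cmod_mellin_kernel.
  - apply filterlim_exp_ln_at_right_0; assumption.
Qed.

Lemma filterlim_mellin_kernel_p_infty (s mu : C) :
  (0 < Re mu)%R -> filterlim (mellin_kernel s mu) (Rbar_locally p_infty) (locally (0 : C)).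
Proof.
  intros Hmu. apply filterlim_Cmod_0.
  apply (filterlim_ext (fun t => exp (Re s * ln t - Re mu * t))).
  - intros t. symmetry. apply Cmod_mellin_kernel.
  - apply is_lim_exp_ln_p_infty, Hmu.
Qed.

Definition Cpoly (a : nat -> C) (N : nat) (t : R) : C := Csum (fun j => a j * RtoC t ^ j) N.

Lemma Cpoly_S (a : nat -> C) (N : nat) (t : R) :
  Cpoly a (S N) t = Cpoly a N t + a (S N) * RtoC t ^ S N.
Proof. reflexivity. Qed.

Lemma Csum_Cpow_mult (a : nat -> C) (mu : C) (N : nat) (t : R) :
  Csum (fun n => a n * (mu * RtoC t) ^ n) N = Cpoly (fun n => a n * mu ^ n) N t.
Proof. apply Csum_ext. intros n _. rewrite Cpow_mult_l. ring. Qed.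

Lemma is_derive_RC_Cpoly (a : nat -> C) (N : nat) (t : R) : (0 < t)%R ->
  is_derive_RC (Cpoly a N) t (Cpoly (fun j => RtoC (INR j) * a j) N t / RtoC t).
Proof.
  intros Ht. assert (Ht' : RtoC t <> 0) by (intros E; apply RtoC_inj in E; lra).
  eapply is_derive_RC_eq.
  - apply (is_derive_RC_Csum (fun j s => a j * RtoC s ^ j)).
    intros j _. apply is_derive_RC_scal, is_derive_RC_pow.
  - unfold Cpoly, Cdiv. rewrite Cmult_comm, <- Csum_mult_l.
    apply Csum_ext. intros [|j] _; simpl.
    + change (INR 0) with 0%R. ring.
    + field. exact Ht'.
Qed.

Lemma mellin_kernel_mul_Cpoly (s mu : C) (a : nat -> C) (N : nat) (t : R) : (0 < t)%R ->
  mellin_kernel s mu t * Cpoly a N t = Csum (fun j => a j * mellin_kernel (s + RtoC (INR j)) mu t) N.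
Proof.
  intros Ht. unfold Cpoly. rewrite <- Csum_mult_l. apply Csum_ext. intros j _.
  rewrite <- mellin_kernel_mul_pow by exact Ht. ring.
Qed.

Lemma filterlim_mellin_kernel_mul_Cpoly {F : (R -> Prop) -> Prop} {FF : Filter F}
  (s mu : C) (a : nat -> C) (N : nat) :
  F (fun t => 0 < t)%R ->
  (forall j, (j <= N)%nat -> filterlim (mellin_kernel (s + RtoC (INR j)) mu) F (locally (0 : C))) ->
  filterlim (fun t => mellin_kernel s mu t * Cpoly a N t) F (locally (0 : C)).
Proof.
  intros Hpos Hlim.
  apply (filterlim_ext_loc (fun t => Csum (fun j => a j * mellin_kernel (s + RtoC (INR j)) mu t) N)).
  - apply (filter_imp _ _ (fun t Ht => eq_sym (mellin_kernel_mul_Cpoly s mu a N t Ht)) Hpos).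
  - exact (filterlim_Csum_0 a _ N Hlim).
Qed.

Section MellinAntiderivative.

Variables (beta mu : C) (c : nat -> C).
Hypothesis beta_plus_INR_neq0 : forall j, beta + RtoC (INR j) <> 0.

(* Matching coefficients in [(t^beta e^(-mu t) Cpoly d N t)' = t^(beta-1) e^(-mu t)
   sum_n c_n (mu t)^n] gives [(beta + j) d_j - mu d_(j-1) = c_j mu^j], solved in closed
   form below; only the leftover top term [- mu d_N t^(N+1)] obstructs the identity, and
   d_N = 0 exactly when [sum_n c_n (beta)_n = 0]. *)
Definition mellin_antider_coef (j : nat) : C :=
  mu ^ j * Csum (fun n => c n * poch beta n) j / poch beta (S j).

Let d := mellin_antider_coef.

Lemma poch_beta_neq0 (n : nat) : poch beta n <> 0.
Proof. apply poch_neq0. intros i _. apply beta_plus_INR_neq0. Qed.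

Lemma mellin_antider_coef_0 : beta * d 0 = c 0.
Proof.
  unfold d, mellin_antider_coef. simpl.
  pose proof (beta_plus_INR_neq0 0) as H0. change (INR 0) with 0%R in *.
  field. rewrite <- (Cplus_0_r beta). exact H0.
Qed.

Lemma mellin_antider_coef_S (j : nat) :
  (beta + RtoC (INR (S j))) * d (S j) = c (S j) * mu ^ S j + mu * d j.
Proof.
  unfold d, mellin_antider_coef.
  change (Csum (fun n => c n * poch beta n) (S j))
    with (Csum (fun n => c n * poch beta n) j + c (S j) * poch beta (S j)).
  rewrite (poch_S beta (S j)), Cpow_S.
  pose proof (poch_beta_neq0 (S j)). pose proof (beta_plus_INR_neq0 (S j)).
  field. split; assumption.
Qed.

Lemma mellin_antider_identity (t : R) (M : nat) :
  Cpoly (fun n => c n * mu ^ n) M t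
  = (beta - mu * RtoC t) * Cpoly d M t + Cpoly (fun j => RtoC (INR j) * d j) M t
    + mu * d M * RtoC t ^ S M.
Proof.
  induction M as [|M IH].
  - unfold Cpoly. simpl. rewrite <- mellin_antider_coef_0. change (INR 0) with 0%R. ring.
  - rewrite !Cpoly_S, IH.
    replace (c (S M) * mu ^ S M) with ((beta + RtoC (INR (S M))) * d (S M) - mu * d M)
      by (rewrite mellin_antider_coef_S; ring).
    simpl Cpow. ring.
Qed.

Lemma is_derive_mellin_antider (N : nat) (t : R) : (0 < t)%R -> d N = 0 ->
  is_derive_RC (fun u => mellin_kernel beta mu u * Cpoly d N u) t
    (mellin_kernel (beta - 1) mu t * Cpoly (fun n => c n * mu ^ n) N t).
Proof.
  intros Ht HdN. assert (Ht' : RtoC t <> 0) by (intros E; apply RtoC_inj in E; lra).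
  eapply is_derive_RC_eq.
  - apply is_derive_RC_mult; [apply is_derive_mellin_kernel | apply is_derive_RC_Cpoly]; exact Ht.
  - rewrite mellin_antider_identity, HdN, (mellin_kernel_succ beta mu t Ht). field. exact Ht'.
Qed.

End MellinAntiderivative.

Lemma Re_plus_INR_pos (z : C) (j : nat) : (0 < Re z)%R -> (0 < Re (z + RtoC (INR j)))%R.
Proof. intros Hz. unfold Re in *; simpl. pose proof (pos_INR j). lra. Qed.

Theorem is_RInt_gen_mellin_poly_eq0 (beta mu : C) (c : nat -> C) (N : nat) :
  (0 < Re beta)%R -> (0 < Re mu)%R -> Csum (fun n => c n * poch beta n) N = 0 ->
  is_RInt_gen (fun t => mellin_kernel (beta - 1) mu t * Csum (fun n => c n * (mu * RtoC t) ^ n) N)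
    (at_right 0) (Rbar_locally p_infty) (RtoC 0).
Proof.
  intros Hb Hmu Hsum.
  assert (Hbeta : forall j, beta + RtoC (INR j) <> 0).
  { intros j E. pose proof (Re_plus_INR_pos beta j Hb) as H. rewrite E in H. simpl in H. lra. }
  set (d := mellin_antider_coef beta mu c).
  assert (HdN : d N = 0) by (unfold d, mellin_antider_coef; rewrite Hsum; unfold Cdiv; ring).
  replace (RtoC 0) with (minus (RtoC 0) (RtoC 0)) by (apply injective_projections; simpl; ring).
  apply (is_RInt_gen_antiderivative _ (fun t => mellin_kernel beta mu t * Cpoly d N t)).
  - apply (Filter_prod _ _ _ _ _ at_right_0_pos Rbar_locally_p_infty_pos).
    intros a b Ha Hb'. simpl.
    apply (is_RInt_derive_RC (fun t => mellin_kernel beta mu t * Cpoly d N t));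
      intros x Hx; assert (Hx0 : (0 < x)%R)
        by (eapply Rlt_le_trans; [apply (Rmin_pos a b Ha Hb')|apply Hx]).
    + rewrite Csum_Cpow_mult. apply is_derive_mellin_antider; assumption.
    + eexists. apply is_derive_RC_mult; [apply is_derive_mellin_kernel, Hx0|].
      apply (is_derive_RC_ext (Cpoly (fun n => c n * mu ^ n) N)).
      * intros u. symmetry. apply Csum_Cpow_mult.
      * apply is_derive_RC_Cpoly, Hx0.
  - apply filterlim_mellin_kernel_mul_Cpoly; [exact at_right_0_pos|].
    intros j _. apply filterlim_mellin_kernel_at_right_0; [apply Re_plus_INR_pos, Hb|lra].
  - apply filterlim_mellin_kernel_mul_Cpoly; [exact Rbar_locally_p_infty_pos|].
    intros j _. apply filterlim_mellin_kernel_p_infty, Hmu.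
Qed.

Theorem mainTheorem18 (m k : nat) (beta mu : C) :
  (1 <= m)%nat -> (1 <= k)%nat ->
  (forall j : nat, beta / 2 - RtoC (INR m) <> RtoC (- INR j)%R) ->
  (0 < Re beta)%R -> (0 < Re mu)%R ->
  is_RInt_gen
    (fun t : R =>
       Rcpow t (beta - 1) * Cexp (- (mu * RtoC t)) *
       F22_trunc (RtoC (- INR (2 * m + 1)))
                 (RtoC (- INR m - INR k - / 2)%R)
                 (RtoC (- INR (2 * m + 2 * k + 1)))
                 (beta / 2 - RtoC (INR m))
                 (mu * RtoC t) (2 * m + 1))
    (at_right 0) (Rbar_locally p_infty) (RtoC 0).
Proof.
  intros _ Hk Hx Hb Hmu.
  set (a := RtoC (- INR m - INR k - / 2)%R).
  assert (H2a : RtoC (- INR (2 * m + 2 * k + 1)) = 2 * a).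
  { unfold a. rewrite <- RtoC_mult. f_equal. rewrite !plus_INR, !mult_INR. simpl. field. }
  set (c := fun n => poch (RtoC (- INR (2 * m + 1))) n * poch a n
                     / (poch (2 * a) n * poch (beta / 2 - RtoC (INR m)) n) / RtoC (INR (fact n))).
  apply (is_RInt_gen_ext (fun t => mellin_kernel (beta - 1) mu t
                                   * Csum (fun n => c n * (mu * RtoC t) ^ n) (2 * m + 1))).
  { apply filter_forall. intros ab t _. unfold mellin_kernel, F22_trunc. rewrite H2a. f_equal.
    apply Csum_ext. intros n _. unfold c, Cdiv. ring. }
  apply is_RInt_gen_mellin_poly_eq0; [exact Hb | exact Hmu |].
  rewrite (Csum_ext _ (F32_term (RtoC (- INR (2 * m + 1))) a beta (2 * a) (beta / 2 - RtoC (INR m))))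
    by (intros n _; unfold c, F32_term, Cdiv; ring).
  apply F32_watson_odd; [|exact Hx].
  apply poch_neq0. intros i Hi. rewrite <- H2a, <- RtoC_plus. intros E. apply RtoC_inj in E.
  assert (INR i < INR (2 * m + 2 * k + 1))%R by (apply lt_INR; lia). lra.
Qed.
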